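(* Let $E\subset\mathbb{Q}_p$ be a $p$-homogeneous discrete set. Then there exists an isometry $f:\mathbb{Q}_p\to\mathbb{Q}_p$ (with respect to $|\cdot|_p$) such that $$f(E)=\widehat E:=\Big\{\sum_{i\in I_E}\beta_ip^i:\ \beta_i\in\{0,1,\dots,p-1\},\ \text{only finitely many }\beta_i\neq0\Big\}.$$
   Context: $p\ge2$ is a prime, $v_p$ is the $p$-adic valuation and $|x|_p=p^{-v_p(x)}$. Balls are $B(a,p^{-n})=a+p^n\mathbb{Z}_p$. Admissible $p$-orders: $I_E=\{v_p(x-y):x,y\in E,\ x\ne y\}$ and $I_E^{\ge n}=\{i\in I_E:i\ge n\}$. $p$-homogeneous discrete set: $E$ with $I_E$ bounded above is $p$-homogeneous if $\sharp(E\cap B(a,p^{-n}))\in\{0,\ p^{\sharp I_E^{\ge n}}\}$ for all $n\in\mathbb{Z}$ and all $a\in\mathbb{Q}_p$. *)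

From Stdlib Require Import ZArith Arith Lia List Classical ClassicalEpsilon Reals Znumtheory.

(* The field Q_p, modelled by its canonical p-adic digit expansions: *)
(*   x = sum_{i in Z} dig x i * p^i,  0 <= dig x i < p,              *)
Record Qp (p : nat) : Type := mkQp {
  dig : Z -> nat;
  dig_lt : forall i, (dig i < p)%nat;
  dig_low : exists N, forall i, (i < N)%Z -> dig i = 0%nat }.
Arguments mkQp {p}.
Arguments dig {p}.
Arguments dig_lt {p}.
Arguments dig_low {p}.

(* position i is 1 iff  sum_{j<i} x_j p^j  <  sum_{j<i} y_j p^j.       *)
Definition borrow {p : nat} (x y : Qp p) (i : Z) : nat :=
  if excluded_middle_informative
       (exists j, (j < i)%Z /\ (dig x j < dig y j)%nat /\
                  forall k, (j < k < i)%Z -> dig x k = dig y k)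
  then 1%nat else 0%nat.

Definition sub_dig {p : nat} (x y : Qp p) (i : Z) : nat :=
  ((dig x i + p - dig y i - borrow x y i) mod p)%nat.

Lemma sub_dig_lt {p : nat} (x y : Qp p) i : (sub_dig x y i < p)%nat.
Proof.
  unfold sub_dig. apply Nat.mod_upper_bound. pose proof (dig_lt x 0%Z). lia.
Qed.

Lemma sub_dig_low {p : nat} (x y : Qp p) :
  exists N, forall i, (i < N)%Z -> sub_dig x y i = 0%nat.
Proof.
  destruct (dig_low x) as [Nx Hx]; destruct (dig_low y) as [Ny Hy].
  exists (Z.min Nx Ny). intros i Hi. unfold sub_dig, borrow.
  rewrite (Hx i) by lia. rewrite (Hy i) by lia.
  destruct (excluded_middle_informative _) as [[j [Hj [Hlt _]]]|_].
  - rewrite (Hx j), (Hy j) in Hlt by lia. lia.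
  - replace (0 + p - 0 - 0)%nat with p by lia. apply Nat.Div0.mod_same.
Qed.

Definition Qpsub {p : nat} (x y : Qp p) : Qp p :=
  mkQp (sub_dig x y) (sub_dig_lt x y) (sub_dig_low x y).

Definition is_val {p : nat} (x : Qp p) (v : Z) : Prop :=
  dig x v <> 0%nat /\ forall i, (i < v)%Z -> dig x i = 0%nat.

Definition absp {p : nat} (x : Qp p) : R :=
  if excluded_middle_informative (exists v, is_val x v)
  then powerRZ (INR p) (- epsilon (inhabits 0%Z) (is_val x))
  else 0%R.

Definition ball {p : nat} (a : Qp p) (n : Z) (x : Qp p) : Prop :=
  (absp (Qpsub x a) <= powerRZ (INR p) (- n))%R.

Definition adm_orders {p : nat} (E : Qp p -> Prop) (i : Z) : Prop :=
  exists x y, E x /\ E y /\ x <> y /\ is_val (Qpsub x y) i.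

Definition card_is {T : Type} (A : T -> Prop) (k : nat) : Prop :=
  exists l : list T, NoDup l /\ length l = k /\ forall x, In x l <-> A x.

Definition p_homogeneous {p : nat} (E : Qp p -> Prop) : Prop :=
  forall (n : Z) (a : Qp p),
    card_is (fun x => E x /\ ball a n x) 0%nat \/
    exists k, card_is (fun i => adm_orders E i /\ (n <= i)%Z) k /\
              card_is (fun x => E x /\ ball a n x) (p ^ k)%nat.

Definition isometry {p : nat} (f : Qp p -> Qp p) : Prop :=
  forall x y, absp (Qpsub (f x) (f y)) = absp (Qpsub x y).

(* E-hat = { sum_{i in I_E} beta_i p^i : beta_i in {0..p-1}, finitely many
   nonzero }; in the digit model this is the set of elements whose digits
   vanish outside I_E and are nonzero only finitely often. *)
Definition hatE {p : nat} (E : Qp p -> Prop) (x : Qp p) : Prop :=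
  (forall i, dig x i <> 0%nat -> adm_orders E i) /\
  exists M, forall i, (M < i)%Z -> dig x i = 0%nat.

From Stdlib Require Import ZArith Arith List Classical ClassicalEpsilon Reals Znumtheory.
From Stdlib Require Import Lia Lra ProofIrrelevance FunctionalExtensionality.

(* The isometry acts digitwise. At an admissible order i the digit is kept. At any other
   position, all points of E that agree with x below i share the same i-th digit (otherwise
   i would be the valuation of a difference of two points of E); subtracting this forced
   digit modulo p depends only on the digits of x below i, so it preserves the position of
   the first differing digit of two points and hence |x - y|_p. Points of E are thus sent to
   numbers whose digits live on I_E. Conversely, p-homogeneity makes every ball of radius
   p^-n around a point of E, n in I_E, contain points of E with each of the p possible n-th
   digits, so every digit pattern supported on I_E is matched by a point of E. *)

Definition agree {p : nat} (x y : Qp p) (i : Z) : Prop :=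
  forall j, (j < i)%Z -> dig x j = dig y j.

Definition first_diff {p : nat} (x y : Qp p) (v : Z) : Prop :=
  dig x v <> dig y v /\ agree x y v.

Lemma agree_succ {p : nat} (x y : Qp p) n :
  agree x y (n + 1) <-> agree x y n /\ dig x n = dig y n.
Proof.
  split.
  - intros H. split; [intros j Hj; apply H; lia | apply H; lia].
  - intros [H Hn] j Hj. destruct (Z.lt_ge_cases j n); [auto|].
    replace j with n by lia. exact Hn.
Qed.

Lemma first_diff_unique {p : nat} (x y : Qp p) v w :
  first_diff x y v -> first_diff x y w -> v = w.
Proof.
  intros [Hv Av] [Hw Aw]. destruct (Z.lt_trichotomy v w) as [H|[H|H]]; auto.
  - exfalso. exact (Hv (Aw v H)).
  - exfalso. exact (Hw (Av w H)).
Qed.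

Lemma exists_least_Z (P : Z -> Prop) N j :
  (forall i, P i -> (N <= i)%Z) -> P j ->
  exists w, P w /\ forall i, (i < w)%Z -> ~ P i.
Proof.
  intros HN. remember (Z.to_nat (j - N)) as k eqn:Hk.
  assert (Hk' : (Z.to_nat (j - N) <= k)%nat) by lia. clear Hk. revert j Hk'.
  induction k as [|k IH]; intros j Hk Pj.
  - exists j. split; auto. intros i Hi Pi. pose proof (HN i Pi). pose proof (HN j Pj). lia.
  - destruct (classic (exists i, (i < j)%Z /\ P i)) as [[i [Hi Pi]]|Hno].
    + apply (IH i); auto. pose proof (HN i Pi). lia.
    + exists j. split; auto. intros i Hi Pi. apply Hno; eauto.
Qed.

Lemma Qp_ext {p : nat} (x y : Qp p) : (forall i, dig x i = dig y i) -> x = y.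
Proof.
  destruct x as [dx lx ox], y as [dy ly oy]; simpl; intros H.
  assert (dx = dy) by (apply functional_extensionality; auto). subst.
  f_equal; apply proof_irrelevance.
Qed.

Lemma eq_or_first_diff {p : nat} (x y : Qp p) : x = y \/ exists v, first_diff x y v.
Proof.
  destruct (classic (exists i, dig x i <> dig y i)) as [[i Hi]|Hno].
  - right. destruct (dig_low x) as [Nx Hx], (dig_low y) as [Ny Hy].
    destruct (exists_least_Z (fun i => dig x i <> dig y i) (Z.min Nx Ny) i)
      as [w [Hw Hlt]]; auto.
    + intros k Hk. destruct (Z_lt_le_dec k (Z.min Nx Ny)); auto.
      rewrite Hx, Hy in Hk by lia. congruence.
    + exists w. split; auto. intros k Hk. apply NNPP. apply Hlt; auto.
  - left. apply Qp_ext. intros i. apply NNPP. intros H. apply Hno. eauto.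
Qed.

Lemma borrow_agree {p : nat} (x y : Qp p) i : agree x y i -> borrow x y i = 0%nat.
Proof.
  intros H. unfold borrow.
  destruct (excluded_middle_informative _) as [[j [Hj [Hl _]]]|]; auto.
  rewrite (H j Hj) in Hl. lia.
Qed.

Lemma is_val_unique {p : nat} (z : Qp p) v w : is_val z v -> is_val z w -> v = w.
Proof.
  intros [Hv Lv] [Hw Lw]. destruct (Z.lt_trichotomy v w) as [H|[H|H]]; auto.
  - exfalso. exact (Hv (Lw v H)).
  - exfalso. exact (Hw (Lv w H)).
Qed.

Lemma absp_is_val {p : nat} (z : Qp p) v : is_val z v -> absp z = powerRZ (INR p) (- v).
Proof.
  intros Hv. unfold absp. destruct (excluded_middle_informative _) as [He|He].
  - rewrite (is_val_unique z _ v (epsilon_spec (inhabits 0%Z) (is_val z) He) Hv).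
    reflexivity.
  - exfalso; eauto.
Qed.

Lemma absp_no_val {p : nat} (z : Qp p) : (forall v, ~ is_val z v) -> absp z = 0%R.
Proof.
  intros H. unfold absp.
  destruct (excluded_middle_informative _) as [[v Hv]|]; auto.
  exfalso; eapply H; eauto.
Qed.

Lemma absp_ext {p : nat} (a b : Qp p) :
  (forall v, is_val a v <-> is_val b v) -> absp a = absp b.
Proof.
  intros H. destruct (classic (exists v, is_val a v)) as [[v Hv]|Hno].
  - rewrite (absp_is_val a v), (absp_is_val b v); auto. apply H; auto.
  - rewrite !absp_no_val; [reflexivity| |]; intros v Hv; apply Hno; exists v;
      [apply H|]; exact Hv.
Qed.

Section Digits.
Context {p : nat} (p_ge2 : (2 <= p)%nat).

Lemma sub_mod_p a c : (a < p)%nat -> (c < p)%nat ->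
  ((a + p - c) mod p = if c <=? a then a - c else a + p - c)%nat.
Proof.
  intros Ha Hc. destruct (Nat.leb_spec c a).
  - replace (a + p - c)%nat with ((a - c) + 1 * p)%nat by lia.
    rewrite Nat.Div0.mod_add, Nat.mod_small by lia. reflexivity.
  - apply Nat.mod_small. lia.
Qed.

Lemma sub_mod_eq0_iff a c : (a < p)%nat -> (c < p)%nat ->
  ((a + p - c) mod p = 0 <-> a = c)%nat.
Proof.
  intros Ha Hc. rewrite sub_mod_p by auto. destruct (Nat.leb_spec c a); lia.
Qed.

Lemma sub_dig_agree (x y : Qp p) i :
  agree x y i -> (sub_dig x y i = 0%nat <-> dig x i = dig y i).
Proof.
  intros H. unfold sub_dig. rewrite borrow_agree, Nat.sub_0_r by auto.
  apply sub_mod_eq0_iff; apply dig_lt.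
Qed.

Lemma is_val_Qpsub (x y : Qp p) v : is_val (Qpsub x y) v <-> first_diff x y v.
Proof.
  assert (Hfd : forall w, first_diff x y w -> is_val (Qpsub x y) w).
  { intros w [Hw Aw]. split; simpl.
    - rewrite sub_dig_agree; auto.
    - intros i Hi. apply sub_dig_agree; [intros j Hj|]; apply Aw; lia. }
  split; auto. intros Hv.
  destruct (eq_or_first_diff x y) as [<-|[w Hw]].
  - exfalso. apply (proj1 Hv). simpl. apply sub_dig_agree; [intros j _|]; reflexivity.
  - rewrite (is_val_unique _ v w Hv (Hfd w Hw)). exact Hw.
Qed.

Lemma isometry_of_first_diff (f : Qp p -> Qp p) :
  (forall x y v, first_diff (f x) (f y) v <-> first_diff x y v) -> isometry f.
Proof.
  intros Hf x y. apply absp_ext. intros v. rewrite !is_val_Qpsub. apply Hf.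
Qed.

Lemma powerRZ_le_iff (n w : Z) :
  (powerRZ (INR p) (- w) <= powerRZ (INR p) (- n))%R <-> (n <= w)%Z.
Proof.
  assert (H1 : (1 < INR p)%R) by (replace 1%R with (INR 1) by reflexivity; apply lt_INR; lia).
  rewrite !powerRZ_Rpower by lra. split; intros H.
  - destruct (Z_le_gt_dec n w); auto. exfalso.
    assert (Rpower (INR p) (IZR (- n)) < Rpower (INR p) (IZR (- w)))%R
      by (apply Rpower_lt; auto; apply IZR_lt; lia).
    lra.
  - apply Rle_Rpower; try lra. apply IZR_le. lia.
Qed.

Lemma ball_agree (a : Qp p) n x : ball a n x <-> agree x a n.
Proof.
  unfold ball. destruct (eq_or_first_diff x a) as [<-|[w Hw]].
  - rewrite absp_no_val.
    + split; [intros _ j _; reflexivity|intros _]. apply powerRZ_le.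
      replace 0%R with (INR 0) by reflexivity. apply lt_INR. lia.
    + intros v Hv. apply is_val_Qpsub in Hv. apply (proj1 Hv). reflexivity.
  - rewrite (absp_is_val _ w) by (apply is_val_Qpsub; auto). rewrite powerRZ_le_iff.
    destruct Hw as [Hw Aw]. split.
    + intros H i Hi. apply Aw. lia.
    + intros H. destruct (Z_le_gt_dec n w); auto. exfalso. apply Hw, H. lia.
Qed.

Section DigitShift.
Variable g : Qp p -> Z -> nat.
Hypothesis g_lt : forall x i, (g x i < p)%nat.
Hypothesis g_low : forall x, exists N, forall i, (i < N)%Z -> g x i = 0%nat.
Hypothesis g_causal : forall x y i, agree x y i -> g x i = g y i.

Definition shift_dig (x : Qp p) (i : Z) : nat := ((dig x i + p - g x i) mod p)%nat.

Lemma shift_dig_lt x i : (shift_dig x i < p)%nat.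
Proof. apply Nat.mod_upper_bound. lia. Qed.

Lemma shift_dig_low x : exists N, forall i, (i < N)%Z -> shift_dig x i = 0%nat.
Proof.
  destruct (dig_low x) as [Nx Hx], (g_low x) as [Ng Hg].
  exists (Z.min Nx Ng). intros i Hi. unfold shift_dig.
  rewrite Hx, Hg by lia. apply sub_mod_eq0_iff; lia.
Qed.

Definition shift (x : Qp p) : Qp p := mkQp (shift_dig x) (shift_dig_lt x) (shift_dig_low x).

Lemma shift_dig_id x i : g x i = 0%nat -> shift_dig x i = dig x i.
Proof.
  intros H. unfold shift_dig. rewrite H, sub_mod_p by (apply dig_lt || lia).
  simpl. lia.
Qed.

Lemma shift_dig_eq0_iff x i : shift_dig x i = 0%nat <-> dig x i = g x i.
Proof. apply sub_mod_eq0_iff; auto using dig_lt. Qed.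

Lemma shift_dig_eq_iff x y i :
  g x i = g y i -> (shift_dig x i = shift_dig y i <-> dig x i = dig y i).
Proof.
  intros Hg. unfold shift_dig. rewrite <- Hg.
  pose proof (dig_lt x i); pose proof (dig_lt y i); pose proof (g_lt x i).
  rewrite !sub_mod_p by auto.
  destruct (Nat.leb_spec (g x i) (dig x i)), (Nat.leb_spec (g x i) (dig y i)); lia.
Qed.

Lemma shift_agree x y i : agree x y i -> agree (shift x) (shift y) i.
Proof.
  intros H j Hj. simpl. apply shift_dig_eq_iff; [apply g_causal; intros k Hk|]; apply H; lia.
Qed.

Lemma shift_first_diff x y v : first_diff (shift x) (shift y) v <-> first_diff x y v.
Proof.
  assert (Hfd : forall w, first_diff x y w -> first_diff (shift x) (shift y) w).
  { intros w [Hw Aw]. split; [|apply shift_agree; auto].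
    simpl. rewrite shift_dig_eq_iff; auto. }
  split; auto. intros Hv.
  destruct (eq_or_first_diff x y) as [<-|[w Hw]].
  - exfalso. apply (proj1 Hv). reflexivity.
  - rewrite (first_diff_unique _ _ v w Hv (Hfd w Hw)). exact Hw.
Qed.

Lemma shift_isometry : isometry shift.
Proof. apply isometry_of_first_diff, shift_first_diff. Qed.

End DigitShift.
End Digits.

Section ForcedDigits.
Context {p : nat} (p_ge2 : (2 <= p)%nat) (E : Qp p -> Prop).

Lemma E_digit_forced e e' i :
  E e -> E e' -> agree e e' i -> ~ adm_orders E i -> dig e i = dig e' i.
Proof.
  intros He He' Ha Hn. apply NNPP. intros Hd. apply Hn.
  exists e, e'. split; [exact He|]. split; [exact He'|]. split.
  - intros Heq. subst. auto.
  - apply (is_val_Qpsub p_ge2). split; auto.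
Qed.

Definition forced_digit (x : Qp p) (i : Z) : nat :=
  if excluded_middle_informative (adm_orders E i) then 0%nat else
  match excluded_middle_informative (exists e, E e /\ agree e x i) with
  | left H => dig (proj1_sig (constructive_indefinite_description _ H)) i
  | right _ => 0%nat
  end.

Lemma forced_digit_adm x i : adm_orders E i -> forced_digit x i = 0%nat.
Proof.
  intros H. unfold forced_digit.
  destruct (excluded_middle_informative _); [reflexivity|contradiction].
Qed.

Lemma forced_digit_none x i :
  ~ (exists e, E e /\ agree e x i) -> forced_digit x i = 0%nat.
Proof.
  intros H. unfold forced_digit. destruct (excluded_middle_informative _); auto.
  destruct (excluded_middle_informative _); [contradiction|reflexivity].
Qed.

Lemma forced_digit_of e x i :
  E e -> agree e x i -> ~ adm_orders E i -> forced_digit x i = dig e i.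
Proof.
  intros He Ha Hn. unfold forced_digit.
  destruct (excluded_middle_informative _) as [|_]; [contradiction|].
  destruct (excluded_middle_informative _) as [H|H]; [|exfalso; eauto].
  destruct (constructive_indefinite_description _ H) as [e1 [He1 Ha1]]. simpl.
  apply E_digit_forced; auto. intros j Hj. rewrite Ha1, Ha; auto.
Qed.

Lemma forced_digit_lt x i : (forced_digit x i < p)%nat.
Proof.
  destruct (classic (adm_orders E i)) as [Hi|Hi]; [rewrite forced_digit_adm by exact Hi; lia|].
  destruct (classic (exists e, E e /\ agree e x i)) as [[e [He Ha]]|Hno].
  - rewrite (forced_digit_of e) by auto. apply dig_lt.
  - rewrite forced_digit_none by auto. lia.
Qed.

Lemma forced_digit_causal x y i : agree x y i -> forced_digit x i = forced_digit y i.
Proof.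
  intros Hxy.
  destruct (classic (adm_orders E i)) as [Hi|Hi]; [rewrite !forced_digit_adm; auto|].
  destruct (classic (exists e, E e /\ agree e x i)) as [[e [He Ha]]|Hno].
  - rewrite !(forced_digit_of e); auto. intros j Hj. rewrite Ha, Hxy; auto.
  - rewrite !forced_digit_none; auto. intros [e [He Ha]]. apply Hno.
    exists e. split; auto. intros j Hj. rewrite Ha, Hxy; auto.
Qed.

Lemma forced_digit_low (hne : exists e, E e) x :
  exists N, forall i, (i < N)%Z -> forced_digit x i = 0%nat.
Proof.
  destruct hne as [e0 He0], (dig_low x) as [Nx Hx], (dig_low e0) as [N0 H0].
  exists (Z.min Nx N0). intros i Hi.
  destruct (classic (adm_orders E i)); [apply forced_digit_adm; auto|].
  rewrite (forced_digit_of e0); auto; [apply H0; lia|].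
  intros j Hj. rewrite Hx, H0 by lia. reflexivity.
Qed.

Definition hat_map (hne : exists e, E e) : Qp p -> Qp p :=
  shift p_ge2 forced_digit (forced_digit_low hne).

Variable hne : exists e, E e.

Lemma hat_map_isometry : isometry (hat_map hne).
Proof. apply shift_isometry; [apply forced_digit_lt|apply forced_digit_causal]. Qed.

Lemma hat_map_dig_adm x i : adm_orders E i -> dig (hat_map hne x) i = dig x i.
Proof. intros H. apply (shift_dig_id p_ge2), forced_digit_adm, H. Qed.

Lemma hat_map_dig_E e i : E e -> ~ adm_orders E i -> dig (hat_map hne e) i = 0%nat.
Proof.
  intros He Hi. apply (shift_dig_eq0_iff p_ge2); [apply forced_digit_lt|].
  symmetry. apply (forced_digit_of e); auto. intros j _. reflexivity.
Qed.

Lemma hat_map_E_in_hatE (M : Z) e :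
  (forall i, adm_orders E i -> (i <= M)%Z) -> E e -> hatE E (hat_map hne e).
Proof.
  intros HM He. split.
  - intros i Hi. apply NNPP. intros Hn. exact (Hi (hat_map_dig_E e i He Hn)).
  - exists M. intros i Hi. apply hat_map_dig_E; auto. intros Ha. specialize (HM i Ha). lia.
Qed.

End ForcedDigits.

Lemma card_is_unique {T} (A : T -> Prop) k k' : card_is A k -> card_is A k' -> k = k'.
Proof.
  intros [l [Hl [<- Hla]]] [l' [Hl' [<- Hla']]].
  apply Nat.le_antisymm; apply NoDup_incl_length; auto; intros x Hx.
  - apply Hla', Hla, Hx.
  - apply Hla, Hla', Hx.
Qed.

Lemma card_is_0_empty {T} (A : T -> Prop) x : A x -> ~ card_is A 0.
Proof.
  intros Hx [[|y l] [_ [Hl Hla]]]; [|discriminate Hl]. apply Hla in Hx. destruct Hx.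
Qed.

Lemma card_is_ge_succ (A : Z -> Prop) n k :
  A n -> card_is (fun i => A i /\ (n + 1 <= i)%Z) k ->
  card_is (fun i => A i /\ (n <= i)%Z) (S k).
Proof.
  intros Hn [l [Hl [Hlk Hla]]]. exists (n :: l). split; [|split].
  - constructor; auto. intros Hin. apply Hla in Hin. lia.
  - simpl. lia.
  - intros x. simpl. split.
    + intros [<-|Hx]; [split; auto; lia|]. apply Hla in Hx. split; [apply Hx|lia].
    + intros [Hx1 Hx2]. destruct (Z.eq_dec n x); [left; auto|right].
      apply Hla. split; auto. lia.
Qed.

Lemma sum_seq_bump (F : nat -> nat) h s m :
  list_sum (map (fun c => if Nat.eqb h c then S (F c) else F c) (seq s m)) =
  ((if andb (Nat.leb s h) (Nat.ltb h (s + m)) then 1 else 0) + list_sum (map F (seq s m)))%nat.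
Proof.
  revert s. induction m as [|m IH]; intros s; simpl.
  - destruct (Nat.leb_spec s h), (Nat.ltb_spec h (s + 0)); simpl; lia.
  - rewrite IH. destruct (Nat.eqb_spec h s), (Nat.leb_spec s h),
      (Nat.ltb_spec h (s + S m)), (Nat.leb_spec (S s) h), (Nat.ltb_spec h (S s + m));
      simpl; lia.
Qed.

Lemma length_eq_sum_fibers {A} (f : A -> nat) m (l : list A) :
  (forall a, (f a < m)%nat) ->
  length l = list_sum (map (fun c => length (filter (fun a => Nat.eqb (f a) c) l)) (seq 0 m)).
Proof.
  intros Hf. induction l as [|a l IH]; simpl.
  - clear. induction (seq 0 m); simpl; auto.
  - rewrite (map_ext _ (fun c => if Nat.eqb (f a) c
        then S (length (filter (fun a => Nat.eqb (f a) c) l))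
        else length (filter (fun a => Nat.eqb (f a) c) l))); [rewrite sum_seq_bump|].
    + specialize (Hf a). destruct (Nat.leb_spec 0 (f a)), (Nat.ltb_spec (f a) (0 + m));
        simpl; lia.
    + intros c. simpl. destruct (Nat.eqb (f a) c); reflexivity.
Qed.

Lemma sum_seq_le (F : nat -> nat) P s m :
  (forall c, (s <= c < s + m)%nat -> (F c <= P)%nat) ->
  (list_sum (map F (seq s m)) <= m * P)%nat.
Proof.
  revert s. induction m as [|m IH]; intros s H; simpl; [lia|].
  pose proof (H s ltac:(lia)). pose proof (IH (S s) ltac:(intros c Hc; apply H; lia)). lia.
Qed.

Lemma sum_seq_le_hole (F : nat -> nat) P d s m :
  (forall c, (s <= c < s + m)%nat -> (F c <= P)%nat) ->
  (s <= d < s + m)%nat -> F d = 0%nat ->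
  (list_sum (map F (seq s m)) <= (m - 1) * P)%nat.
Proof.
  revert s. induction m as [|m IH]; intros s H Hd HF; simpl; [lia|].
  destruct (Nat.eq_dec d s) as [<-|Hds].
  - rewrite HF. pose proof (sum_seq_le F P (S d) m ltac:(intros c Hc; apply H; lia)). lia.
  - pose proof (H s ltac:(lia)).
    pose proof (IH (S s) ltac:(intros c Hc; apply H; lia) ltac:(lia) HF).
    destruct m; [lia|]. simpl in *. nia.
Qed.

Section Homogeneous.
Context {p : nat} (p_ge2 : (2 <= p)%nat) (E : Qp p -> Prop) (hhom : p_homogeneous E).

Lemma digit_fiber_card (e z : Qp p) n (l : list (Qp p)) :
  NoDup l -> (forall x, In x l <-> E x /\ ball e n x) -> In z l ->
  card_is (fun x => E x /\ ball z (n + 1) x)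
          (length (filter (fun x => Nat.eqb (dig x n) (dig z n)) l)).
Proof.
  intros Hl Hla Hz. apply Hla in Hz as [_ Hze]. rewrite (ball_agree p_ge2) in Hze.
  exists (filter (fun x => Nat.eqb (dig x n) (dig z n)) l).
  split; [apply NoDup_filter; auto|split; [reflexivity|]].
  intros x. rewrite filter_In, Hla, !(ball_agree p_ge2), agree_succ, Nat.eqb_eq.
  split.
  - intros [[Hx Hxe] Hxn]. repeat split; auto. intros j Hj. rewrite Hxe, Hze; auto.
  - intros [Hx [Hxz Hxn]]. repeat split; auto. intros j Hj. rewrite Hxz, Hze; auto.
Qed.

Lemma ball_card_pow z n : E z ->
  exists k, card_is (fun i => adm_orders E i /\ (n <= i)%Z) k /\
            card_is (fun x => E x /\ ball z n x) (p ^ k).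
Proof.
  intros Hz. destruct (hhom n z) as [H0|Hk]; [exfalso|exact Hk].
  apply (card_is_0_empty (fun x => E x /\ ball z n x) z); [|exact H0].
  split; [exact Hz|]. apply (ball_agree p_ge2). intros j _. reflexivity.
Qed.

(* Counting in the ball B(e, p^-n): its p^(k+1) points of E split by their n-th digit
   into at most p sub-balls of p^k points each, so none of the p digits can be missing. *)
Lemma adm_order_digit_surj n e d : adm_orders E n -> E e -> (d < p)%nat ->
  exists e', E e' /\ agree e' e n /\ dig e' n = d.
Proof.
  intros Hn He Hd. apply NNPP. intros Hno.
  destruct (ball_card_pow e n He) as [k [Hk [l [Hl [Hlk Hla]]]]].
  destruct (ball_card_pow e (n + 1) He) as [k' [Hk' _]].
  assert (Hkk : k = S k') by (eapply card_is_unique; [exact Hk|apply card_is_ge_succ; auto]).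
  subst k.
  set (F := fun c => length (filter (fun x => Nat.eqb (dig x n) c) l)).
  assert (HF : forall c, (F c <= p ^ k')%nat).
  { intros c. unfold F. destruct (filter (fun x => Nat.eqb (dig x n) c) l) as [|z r] eqn:Hf.
    - simpl. lia.
    - assert (Hz : In z (filter (fun x => Nat.eqb (dig x n) c) l)) by (rewrite Hf; left; auto).
      apply filter_In in Hz as [Hz Hzc]. apply Nat.eqb_eq in Hzc. subst c.
      rewrite <- Hf.
      destruct (ball_card_pow z (n + 1) (proj1 (proj1 (Hla z) Hz))) as [k'' [Hk'' Hc]].
      rewrite (card_is_unique _ _ _ Hk'' Hk') in Hc.
      rewrite (card_is_unique _ _ _ (digit_fiber_card e z n l Hl Hla Hz) Hc). lia. }
  assert (HFd : F d = 0%nat).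
  { unfold F.
    destruct (filter (fun x => Nat.eqb (dig x n) d) l) as [|z r] eqn:Hf; [reflexivity|].
    exfalso. assert (Hz : In z (filter (fun x => Nat.eqb (dig x n) d) l))
      by (rewrite Hf; left; auto).
    apply filter_In in Hz as [Hz Hzd]. apply Nat.eqb_eq in Hzd. apply Hla in Hz as [Hz Hze].
    rewrite (ball_agree p_ge2) in Hze. apply Hno. exists z. auto. }
  pose proof (length_eq_sum_fibers (fun x => dig x n) p l (fun x => dig_lt x n))
    as Hcnt.
  change (length l = list_sum (map F (seq 0 p))) in Hcnt.
  rewrite Hlk, Nat.pow_succ_r' in Hcnt.
  pose proof (sum_seq_le_hole F (p ^ k') d 0 p (fun c _ => HF c) ltac:(lia) HFd).
  assert (0 < p ^ k')%nat by (apply Nat.neq_0_lt_0, Nat.pow_nonzero; lia).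
  nia.
Qed.

Lemma E_match_digits (e y : Qp p) N m : E e ->
  exists e', E e' /\ agree e' e N /\
    forall i, (N <= i < N + Z.of_nat m)%Z -> adm_orders E i -> dig e' i = dig y i.
Proof.
  intros He. induction m as [|m IH].
  - exists e. split; auto. split; [intros j _; reflexivity|]. intros i Hi. lia.
  - destruct IH as [e1 [He1 [Ha1 Hi1]]]. set (n := (N + Z.of_nat m)%Z).
    destruct (classic (adm_orders E n)) as [Hn|Hn].
    + destruct (adm_order_digit_surj n e1 (dig y n) Hn He1 (dig_lt _ _))
        as [e2 [He2 [Ha2 Hd2]]].
      exists e2. split; auto. split.
      * intros j Hj. rewrite Ha2 by lia. apply Ha1; auto.
      * intros i Hi Hai. destruct (Z.eq_dec i n) as [->|Hin]; auto.
        rewrite Ha2 by lia. apply Hi1; auto. lia.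
    + exists e1. split; auto. split; auto. intros i Hi Hai.
      destruct (Z.eq_dec i n) as [->|Hin]; [contradiction|]. apply Hi1; auto. lia.
Qed.

Lemma hatE_in_hat_map_image (hne : exists e, E e) (M : Z) y :
  (forall i, adm_orders E i -> (i <= M)%Z) -> hatE E y ->
  exists x, E x /\ hat_map p_ge2 E hne x = y.
Proof.
  intros HM [Hy _]. pose proof hne as [e0 He0].
  destruct (dig_low y) as [Ny Hy0], (dig_low e0) as [Ne He0low].
  set (N := Z.min Ny Ne).
  destruct (E_match_digits e0 y N (Z.to_nat (M - N + 1)) He0) as [e [He [Ha Hi]]].
  exists e. split; auto. apply Qp_ext. intros i.
  destruct (classic (adm_orders E i)) as [Hai|Hni].
  - rewrite hat_map_dig_adm by auto. destruct (Z_lt_le_dec i N).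
    + rewrite Ha, He0low, Hy0 by (unfold N in *; lia). reflexivity.
    + apply Hi; auto. pose proof (HM i Hai). lia.
  - rewrite hat_map_dig_E by auto. symmetry. apply NNPP. intros Hyi. exact (Hni (Hy i Hyi)).
Qed.

End Homogeneous.

Theorem lemma2p14 (p : nat) (hp : prime (Z.of_nat p)) (E : Qp p -> Prop)
  (hne : exists x, E x)
  (hbd : exists M : Z, forall i, adm_orders E i -> (i <= M)%Z)
  (hhom : p_homogeneous E) :
  exists f : Qp p -> Qp p,
    isometry f /\ (forall y, hatE E y <-> exists x, E x /\ f x = y).
Proof.
  assert (p_ge2 : (2 <= p)%nat) by (pose proof (prime_ge_2 _ hp); lia).
  destruct hbd as [M HM].
  exists (hat_map p_ge2 E hne). split; [apply hat_map_isometry|]. intros y. split.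
  - apply (hatE_in_hat_map_image p_ge2 E hhom hne M y HM).
  - intros [x [Hx <-]]. apply (hat_map_E_in_hatE p_ge2 E hne M x HM Hx).
Qed.
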